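(* Let $\alpha\in\mathbb N^n$ and let $\mathcal A=\{u_1,\ldots,u_m\}$ be a set of monomials of $S=K[x_1,\ldots,x_n]$, minimal with respect to divisibility, such that $K[\mathcal A]$ is a homogeneous $K$-algebra. Identify $S$ with $K[x_{11},\ldots,x_{n1}]\subset S^\alpha$ via $x_i\mapsto x_{i1}$, so that $\mathcal A\subseteq\mathcal A^\alpha$ and $S_{\mathcal A}\subseteq S_{\mathcal A^\alpha}$. If $\mathcal G$ is the reduced Gröbner basis of $I_{\mathcal A^\alpha}$ with respect to a term order $<$ on $S_{\mathcal A^\alpha}$, then $\mathcal G\cap S_{\mathcal A}$ is the reduced Gröbner basis of $I_{\mathcal A}$ with respect to the term order on $S_{\mathcal A}$ induced (by restriction) from $<$.
   Context: $\mathbb N$ denotes the positive integers. For $\alpha=(k_1,\ldots,k_n)$, $S^\alpha=K[x_{ij}:1\le i\le n,1\le j\le k_i]$, $\pi:S^\alpha\to S$, $x_{ij}\mapsto x_i$, and $\mathcal A^\alpha$ is the set of monomials $w\in S^\alpha$ with $\pi(w)\in\mathcal A$. For a finite set $\mathcal B$ of monomials, $S_{\mathcal B}=K[y_u:u\in\mathcal B]$ is a polynomial ring, $K[\mathcal B]$ the $K$-algebra generated by $\mathcal B$, and the toric ideal $I_{\mathcal B}$ is the kernel of $S_{\mathcal B}\to K[\mathcal B]$, $y_u\mapsto u$. *)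

From HB Require Import structures.
From mathcomp Require Import all_boot all_order all_algebra.
From mathcomp Require Import mpoly.

Set Implicit Arguments.
Unset Strict Implicit.
Unset Printing Implicit Defensive.

Import Order.TTheory GRing.Theory.
Local Open Scope ring_scope.

Definition term_order (N : nat) (le : rel 'X_{1..N}) : Prop :=
  [/\ reflexive le, antisymmetric le, transitive le & total le] /\
  (forall mm, le 0%MM mm) /\
  (forall a b c, le a b -> le (a + c)%MM (b + c)%MM).

(* leading (initial) monomial of p w.r.t. le (the le-largest monomial of the
   support; 0 for p = 0) *)
Definition lm (K : fieldType) (N : nat) (le : rel 'X_{1..N})
  (p : {mpoly K[N]}) : 'X_{1..N} :=
  foldr (fun a b => if le a b then b else a) 0%MM (msupp p).

(* G is a Groebner basis of the ideal I w.r.t. le: a finite set of nonzero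
   elements of I whose initial monomials generate in(I). Monomial
   divisibility is the pointwise order (_ <= _)%MM. *)
Definition is_groebner_basis (K : fieldType) (N : nat) (le : rel 'X_{1..N})
  (I : pred {mpoly K[N]}) (G : {mpoly K[N]} -> Prop) : Prop :=
  [/\ exists s : seq {mpoly K[N]}, forall g, G g <-> g \in s,
      (forall g, G g -> I g /\ g != 0) &
      (forall f, I f -> f != 0 -> exists2 g, G g & (lm le g <= lm le f)%MM)].

Definition is_reduced_groebner_basis (K : fieldType) (N : nat)
  (le : rel 'X_{1..N}) (I : pred {mpoly K[N]}) (G : {mpoly K[N]} -> Prop) : Prop :=
  [/\ is_groebner_basis le I G,
      (forall g, G g -> g@_(lm le g) = 1) &
      (forall g g', G g -> G g' -> g <> g' ->
         forall mm, mm \in msupp g -> ~~ (lm le g' <= mm)%MM)].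

Definition toric_ideal (K : fieldType) (N m : nat) (v : 'I_m -> 'X_{1..N}) :
  pred {mpoly K[m]} :=
  fun p => (p \mPo [tuple ('X_[v i] : {mpoly K[N]}) | i < m]) == 0.

Definition homog_comp (K : fieldType) (N : nat) (p : {mpoly K[N]}) (d : nat) :
  {mpoly K[N]} :=
  \sum_(mm <- msupp p | mdeg mm == d) p@_mm *: 'X_[mm].

Definition homogeneous_ideal (K : fieldType) (N : nat) (I : pred {mpoly K[N]}) :
  Prop := forall p d, I p -> I (homog_comp p d).

(* K[A] is a homogeneous K-algebra: K[A] = S_A / I_A with I_A graded for the
   standard grading deg y_u = 1. *)
Definition homogeneous_toric_algebra (K : fieldType) (n m : nat)
  (A : 'I_m -> 'X_{1..n}) : Prop :=
  homogeneous_ideal (@toric_ideal K n m A).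

(* variables x_{ij}, i < n, j < k_i  (0-based indices) *)
Definition var_alpha (n : nat) (k : 'I_n -> nat) : finType :=
  {i : 'I_n & 'I_(k i)}.

Definition mon_alpha (n : nat) (k : 'I_n -> nat) : Type :=
  {ffun var_alpha k -> nat}.

(* the corresponding exponent vector in {mpoly K[#|var_alpha k|]} = S^alpha *)
Definition mon_alpha_mnm (n : nat) (k : 'I_n -> nat) (w : mon_alpha k) :
  'X_{1..#|var_alpha k|} :=
  [multinom w (enum_val j) | j < #|var_alpha k|].

Definition pi_alpha (n : nat) (k : 'I_n -> nat) (w : mon_alpha k) : 'X_{1..n} :=
  [multinom (\sum_(j : 'I_(k i)) w (@Tagged 'I_n i (fun i => 'I_(k i)) j))%N
  | i < n].

Definition iota_alpha (n : nat) (k : 'I_n -> nat) (u : 'X_{1..n}) : mon_alpha k :=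
  [ffun t : var_alpha k => if val (tagged t) == 0%N then u (tag t) else 0%N].

Definition embed_mnm (m M : nat) (f : 'I_m -> 'I_M) (a : 'X_{1..m}) : 'X_{1..M} :=
  [multinom (\sum_(i < m | f i == j) a i)%N | j < M].

Definition embed_poly (K : fieldType) (m M : nat) (f : 'I_m -> 'I_M)
  (p : {mpoly K[m]}) : {mpoly K[M]} :=
  p \mPo [tuple ('X_(f i) : {mpoly K[M]}) | i < m].

Definition induced_order (m M : nat) (f : 'I_m -> 'I_M) (le : rel 'X_{1..M}) :
  rel 'X_{1..m} := fun a b => le (embed_mnm f a) (embed_mnm f b).

From HB Require Import structures.
From mathcomp Require Import all_boot all_order all_algebra.
From mathcomp Require Import mpoly.

Set Implicit Arguments.
Unset Strict Implicit.
Unset Printing Implicit Defensive.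

Import Order.TTheory GRing.Theory.
Local Open Scope ring_scope.

(* The monomials of A^alpha involving only the variables x_{i1} are exactly the
   images of the elements of A.  Hence killing every variable y_u of S_{A^alpha}
   with u outside A amounts to setting the x_{ij}, j > 1, to zero, so it maps
   I_{A^alpha} into itself; moreover I_A is the preimage of I_{A^alpha} under
   S_A ⊂ S_{A^alpha}.  For an ideal stable under such a retraction, an element of
   its reduced Gröbner basis whose leading monomial lies in S_A lies in S_A
   itself.  Since in(f), for f in I_A, is divisible by in(g) for some g in G, and
   such a g then lies in S_A, the set G ∩ S_A is a Gröbner basis of I_A, and
   reducedness is inherited. *)

Section LeadingMonomial.
Variables (N : nat) (le : rel 'X_{1..N}).
Hypothesis le_order : term_order le.

Let le_refl : reflexive le. Proof. by case: le_order => -[]. Qed.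
Let le_anti : antisymmetric le. Proof. by case: le_order => -[]. Qed.
Let le_trans : transitive le. Proof. by case: le_order => -[]. Qed.
Let le_total : total le. Proof. by case: le_order => -[]. Qed.
Let le0m mm : le 0%MM mm. Proof. by case: le_order => _ []. Qed.
Let le_add2r c a b : le a b -> le (a + c)%MM (b + c)%MM.
Proof. by case: le_order => _ [_]; apply. Qed.

Lemma lm_spec (K : fieldType) (p : {mpoly K[N]}) :
  lm le p \in 0%MM :: msupp p /\ {in msupp p, forall x, le x (lm le p)}.
Proof.
rewrite /lm; elim: (msupp p) => [|a s [IHin IHle]] /=; first by rewrite mem_seq1.
set x := foldr _ _ s in IHin IHle *.
case: ifPn => [leax|nleax]; split.
- by move: IHin; rewrite !inE => /predU1P[->|->]; rewrite ?eqxx ?orbT.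
- by move=> y; rewrite inE => /predU1P[->|/IHle].
- by rewrite !inE eqxx orbT.
- have lexa : le x a by move: (le_total a x); rewrite (negbTE nleax).
  move=> y; rewrite inE => /predU1P[->|/IHle lexy]; first exact: le_refl.
  exact: le_trans lexy lexa.
Qed.

Lemma lm_max (K : fieldType) (p : {mpoly K[N]}) :
  {in msupp p, forall x, le x (lm le p)}.
Proof. exact: (lm_spec p).2. Qed.

Lemma lm_msupp (K : fieldType) (p : {mpoly K[N]}) : p != 0 -> lm le p \in msupp p.
Proof.
move=> p0; have [] := lm_spec p; rewrite inE => /predU1P[lm0|//] lm_le.
have [x xp] : {x | x \in msupp p}.
  case E: (msupp p) => [|x s]; last by exists x; rewrite mem_head.
  by move: p0; rewrite -msupp_eq0 E.
have x0 : x = 0%MM by apply: le_anti; rewrite le0m andbT -lm0 lm_le.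
by rewrite lm0 -x0.
Qed.

Lemma lm_unique (K : fieldType) (p : {mpoly K[N]}) x :
  x \in msupp p -> {in msupp p, forall y, le y x} -> lm le p = x.
Proof.
move=> xp x_max; have p0 : p != 0 by apply: contraTneq xp => ->; rewrite msupp0.
by apply: le_anti; rewrite x_max ?lm_msupp ?lm_max.
Qed.

Lemma le_lepm a b : (a <= b)%MM -> le a b.
Proof. by move=> ab; rewrite -(submK ab) -{1}[a]add0m le_add2r. Qed.

End LeadingMonomial.

Definition supported_in (N : nat) (Q : pred 'I_N) (a : 'X_{1..N}) : bool :=
  [forall j, (a j != 0%N) ==> Q j].

Definition zero_outside (K : fieldType) (N : nat) (Q : pred 'I_N)
    (p : {mpoly K[N]}) : {mpoly K[N]} :=
  p \mPo [tuple if Q j then 'X_j else 0 | j < N].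

Section ZeroOutside.
Variables (K : fieldType) (N : nat) (Q : pred 'I_N).

Lemma zero_outsideX a :
  zero_outside Q ('X_[a] : {mpoly K[N]}) = if supported_in Q a then 'X_[a] else 0.
Proof.
rewrite /zero_outside comp_mpolyX; case: ifPn => [/forallP a_in|/forallPn[j]].
  rewrite [RHS]mpolyXE_id; apply: eq_bigr => j _; rewrite tnth_mktuple.
  by case: ifPn (a_in j) => // _; rewrite implybF negbK => /eqP->; rewrite !expr0.
rewrite negb_imply => /andP[aj0 Qj].
by rewrite (bigD1 j) //= tnth_mktuple (negbTE Qj) expr0n (negbTE aj0) mul0r.
Qed.

Lemma mcoeff_zero_outside (p : {mpoly K[N]}) a :
  (zero_outside Q p)@_a = if supported_in Q a then p@_a else 0.
Proof.
rewrite /zero_outside comp_mpolyEX raddf_sum /=.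
under eq_bigr => b _ do rewrite -/(zero_outside _ _) zero_outsideX mcoeffZ.
case: ifPn => a_in.
  rewrite [in RHS](mpolyE p) raddf_sum /=; apply: eq_bigr => b _.
  rewrite mcoeffZ; case: ifPn => // b_out; rewrite mcoeff0 mcoeffX.
  by case: eqP => [ba|_]; [move: b_out; rewrite ba a_in | rewrite mulr0].
rewrite big1 // => b _; case: ifPn => b_in; rewrite ?mcoeff0 ?mulr0 // mcoeffX.
by case: eqP => [ba|_]; [move: a_in; rewrite -ba b_in | rewrite mulr0].
Qed.

End ZeroOutside.

Lemma comp_mpolyA (R : comNzRingType) (n k l : nat) (p : {mpoly R[n]})
    (lq : n.-tuple {mpoly R[k]}) (lr : k.-tuple {mpoly R[l]}) :
  (p \mPo lq) \mPo lr = p \mPo [tuple tnth lq i \mPo lr | i < n].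
Proof.
rewrite {1}[p]mpolyE (raddf_sum (comp_mpoly lq)) (raddf_sum (comp_mpoly lr)).
rewrite [in RHS](mpolyE p) (raddf_sum (comp_mpoly _)).
apply: eq_bigr => a _; rewrite /= !comp_mpolyZ !comp_mpolyX rmorph_prod.
by congr (_ *: _); apply: eq_bigr => i _; rewrite rmorphXn tnth_mktuple.
Qed.

Section VariableEmbedding.
Variables (m M : nat) (f : 'I_m -> 'I_M).
Hypothesis f_inj : injective f.

Lemma embed_mnmE a i : embed_mnm f a (f i) = a i.
Proof. by rewrite mnmE (big_pred1 i) // => i'; rewrite /= (inj_eq f_inj). Qed.

Lemma embed_mnmE_notin a j : j \notin codom f -> embed_mnm f a j = 0%N.
Proof.
move=> jf; rewrite mnmE big_pred0 // => i.
by apply: contraNF jf => /eqP <-; apply: codom_f.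
Qed.

Lemma embed_mnm0 : embed_mnm f 0%MM = 0%MM.
Proof. by apply/mnmP => j; rewrite !mnmE big1 // => i _; rewrite mnm0E. Qed.

Lemma embed_mnmD a b : embed_mnm f (a + b)%MM = (embed_mnm f a + embed_mnm f b)%MM.
Proof.
by apply/mnmP => j; rewrite !mnmE -big_split; apply: eq_bigr => i _; rewrite mnmDE.
Qed.

Lemma embed_mnm_inj : injective (embed_mnm f).
Proof. by move=> a b eq_ab; apply/mnmP => i; rewrite -!embed_mnmE eq_ab. Qed.

Lemma lepm_embed a b : (embed_mnm f a <= embed_mnm f b)%MM = (a <= b)%MM.
Proof.
apply/mnm_lepP/mnm_lepP => le_ab j; first by have := le_ab (f j); rewrite !embed_mnmE.
have [/codomP[i ->]|jf] := boolP (j \in codom f); first by rewrite !embed_mnmE.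
by rewrite !embed_mnmE_notin.
Qed.

Lemma supported_in_lepm_embed a b :
  (a <= embed_mnm f b)%MM -> supported_in [pred j | j \in codom f] a.
Proof.
move/mnm_lepP=> le_ab; apply/forallP => j; apply/implyP; apply: contraR => jf.
by have := le_ab j; rewrite embed_mnmE_notin // leqn0.
Qed.

Lemma induced_term_order le : term_order le -> term_order (induced_order f le).
Proof.
case=> -[le_refl le_anti le_trans le_total] [le0m le_add2r].
split; [split | split].
- by move=> a; apply: le_refl.
- by move=> a b /le_anti /embed_mnm_inj.
- by move=> b a c; apply: le_trans.
- by move=> a b; apply: le_total.
- by move=> a; rewrite /induced_order embed_mnm0.
- by move=> a b c; rewrite /induced_order !embed_mnmD; apply: le_add2r.
Qed.

Section Polynomials.
Variable K : fieldType.
Implicit Types (p : {mpoly K[m]}) (g : {mpoly K[M]}).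

Lemma embed_polyX a : embed_poly f ('X_[a] : {mpoly K[m]}) = 'X_[embed_mnm f a].
Proof.
rewrite /embed_poly comp_mpolyX.
rewrite (eq_bigr (fun i => 'X_[U_(f i)] ^+ a i)) => [|i _]; last by rewrite tnth_mktuple.
rewrite mprodXnE; congr 'X_[_]; apply/mnmP => j.
rewrite mnm_sumE mnmE [RHS]big_mkcond /=; apply: eq_bigr => i _.
by rewrite mulmnE mnm1E; case: eqP; rewrite ?mul1n ?mul0n.
Qed.

Lemma mcoeff_embed_poly p mm :
  (embed_poly f p)@_mm = \sum_(a <- msupp p) p@_a * (embed_mnm f a == mm)%:R.
Proof.
rewrite /embed_poly comp_mpolyEX raddf_sum /=; apply: eq_bigr => a _.
by rewrite -/(embed_poly _ _) embed_polyX mcoeffZ mcoeffX.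
Qed.

Lemma mcoeff_embed_polyE p a : (embed_poly f p)@_(embed_mnm f a) = p@_a.
Proof.
rewrite mcoeff_embed_poly [in RHS](mpolyE p) raddf_sum /=; apply: eq_bigr => b _.
by rewrite mcoeffZ mcoeffX (inj_eq embed_mnm_inj).
Qed.

Lemma msupp_embed_poly p mm : mm \in msupp (embed_poly f p) ->
  exists2 a, a \in msupp p & mm = embed_mnm f a.
Proof.
rewrite mcoeff_msupp mcoeff_embed_poly.
have [/hasP[a ap /eqP <-]|/hasPn no_pre] :=
  boolP (has (fun a => embed_mnm f a == mm) (msupp p)); first by exists a.
by rewrite big_seq big1 ?eqxx // => a /no_pre /negbTE->; rewrite mulr0.
Qed.

Lemma embed_poly_msupp p a : (embed_mnm f a \in msupp (embed_poly f p)) = (a \in msupp p).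
Proof. by rewrite !mcoeff_msupp mcoeff_embed_polyE. Qed.

Lemma embed_poly_inj : injective (@embed_poly K m M f).
Proof. by move=> p q eq_pq; apply/mpolyP => a; rewrite -!mcoeff_embed_polyE eq_pq. Qed.

Lemma embed_poly_eq0 p : (embed_poly f p == 0) = (p == 0).
Proof.
by rewrite -(inj_eq embed_poly_inj) [embed_poly f 0](comp_mpoly0 (R := K)).
Qed.

Lemma lm_embed_poly le p : term_order le -> p != 0 ->
  lm le (embed_poly f p) = embed_mnm f (lm (induced_order f le) p).
Proof.
move=> le_order p0; have ind_order := induced_term_order le_order.
apply: (lm_unique le_order); rewrite ?embed_poly_msupp ?lm_msupp //.
by move=> _ /msupp_embed_poly[a ap ->]; exact: (lm_max ind_order ap).
Qed.

Definition unembed_poly (g : {mpoly K[M]}) : {mpoly K[m]} :=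
  g \mPo [tuple \sum_(i < m | f i == j) 'X_i | j < M].

Lemma embed_polyK : cancel (embed_poly f) unembed_poly.
Proof.
move=> p; rewrite /unembed_poly /embed_poly comp_mpolyA -[RHS]comp_mpoly_id.
congr (_ \mPo _); apply: eq_from_tnth => i; rewrite !tnth_mktuple.
rewrite comp_mpolyXU -tnth_nth tnth_mktuple (big_pred1 i) // => i'.
by rewrite /= (inj_eq f_inj).
Qed.

Lemma unembed_polyK g :
  embed_poly f (unembed_poly g) = zero_outside [pred j | j \in codom f] g.
Proof.
rewrite /embed_poly /unembed_poly comp_mpolyA; congr (_ \mPo _).
apply: eq_from_tnth => j; rewrite !tnth_mktuple raddf_sum /=.
have [/codomP[i ->]|jf] := boolP (j \in codom f).
  rewrite (big_pred1 i) => [|i']; last by rewrite /= (inj_eq f_inj).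
  by rewrite comp_mpolyXU -tnth_nth tnth_mktuple.
rewrite big_pred0 // => i; apply: contraNF jf => /eqP <-; exact: codom_f.
Qed.

End Polynomials.
End VariableEmbedding.

Section ReducedGroebnerZeroOutside.
Variables (K : fieldType) (N : nat) (le : rel 'X_{1..N}) (Q : pred 'I_N).
Variables (I : pred {mpoly K[N]}) (G : {mpoly K[N]} -> Prop).
Hypotheses (le_order : term_order le) (G_red : is_reduced_groebner_basis le I G).
Hypothesis I_sub : forall p q, I p -> I q -> I (p - q).
Hypothesis I_zero_outside : forall p, I p -> I (zero_outside Q p).

(* Otherwise the leading monomial of [g - zero_outside Q g] is a monomial of
   [g] not supported in [Q], divisible by the leading monomial of some [g'] in
   [G]: if [g' = g] it is [lm le g], which is supported in [Q]; otherwise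
   reducedness fails. *)
Lemma reduced_groebner_zero_outside g :
  G g -> supported_in Q (lm le g) -> zero_outside Q g = g.
Proof.
case: G_red => -[_ G_I G_in] _ G_reduced Gg lmg_in.
apply/esym/eqP; rewrite -subr_eq0; apply: contraT => d0.
set d := g - _ in d0.
have Id : I d by have Ig := (G_I g Gg).1; apply: I_sub => //; apply: I_zero_outside.
have mcoeff_d a : d@_a = if supported_in Q a then 0 else g@_a.
  by rewrite mcoeffB mcoeff_zero_outside; case: ifP; rewrite ?subrr ?subr0.
have lmd_out : ~~ supported_in Q (lm le d).
  by have := lm_msupp le_order d0; rewrite mcoeff_msupp mcoeff_d; case: ifP; rewrite ?eqxx.
have lmd_g : lm le d \in msupp g.
  by have := lm_msupp le_order d0; rewrite !mcoeff_msupp mcoeff_d (negbTE lmd_out).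
have [g' Gg' lmg'_lmd] := G_in d Id d0.
have [eq_g'g|neq_g'g] := eqVneq g' g.
  suff lmd : lm le d = lm le g by rewrite lmd lmg_in in lmd_out.
  case: le_order => -[_ le_anti _ _] _; apply: le_anti.
  by rewrite (lm_max le_order lmd_g) (le_lepm le_order) -?eq_g'g.
have neq_gg' : g <> g' by apply/eqP; rewrite eq_sym.
by have := G_reduced g g' Gg Gg' neq_gg' _ lmd_g; rewrite lmg'_lmd.
Qed.

End ReducedGroebnerZeroOutside.

Section ReducedGroebnerRestriction.
Variables (K : fieldType) (m M : nat) (f : 'I_m -> 'I_M) (le : rel 'X_{1..M}).
Variables (I : pred {mpoly K[M]}) (J : pred {mpoly K[m]}) (G : {mpoly K[M]} -> Prop).
Hypotheses (f_inj : injective f) (le_order : term_order le).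
Hypothesis G_red : is_reduced_groebner_basis le I G.
Hypothesis J_embed : forall h, J h = I (embed_poly f h).
Hypothesis I_sub : forall p q, I p -> I q -> I (p - q).
Hypothesis I_zero_outside :
  forall p, I p -> I (zero_outside [pred j | j \in codom f] p).

Let G_in_I g : G g -> I g /\ g != 0.
Proof. by case: G_red => -[_ G_I _] _ _; apply: G_I. Qed.

Lemma restricted_basis_neq0 h : G (embed_poly f h) -> h != 0.
Proof. by move/G_in_I => [_]; rewrite embed_poly_eq0. Qed.

Lemma restricted_basis_finite :
  exists s : seq {mpoly K[m]}, forall h, G (embed_poly f h) <-> h \in s.
Proof.
case: G_red => -[[s G_s] _ _] _ _.
exists [seq unembed_poly f g | g <- s & embed_poly f (unembed_poly f g) == g] => h.
split => [Gh | /mapP[g]].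
  apply/mapP; exists (embed_poly f h); last by rewrite embed_polyK.
  by rewrite mem_filter embed_polyK // eqxx -G_s.
by rewrite mem_filter => /andP[/eqP embed_g /G_s Gg] ->; rewrite embed_g.
Qed.

Lemma restricted_basis_lm_dvd h : J h -> h != 0 ->
  exists2 g, G (embed_poly f g)
    & (lm (induced_order f le) g <= lm (induced_order f le) h)%MM.
Proof.
move=> Jh h0; case: G_red => -[_ _ G_in] _ _.
have [g Gg lmg_lmh] : exists2 g, G g & (lm le g <= lm le (embed_poly f h))%MM.
  by apply: G_in; rewrite -?J_embed ?embed_poly_eq0.
rewrite (lm_embed_poly f_inj le_order h0) in lmg_lmh.
have g_eq : embed_poly f (unembed_poly f g) = g.
  rewrite unembed_polyK //; apply: (reduced_groebner_zero_outside le_order G_red) => //.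
  exact: supported_in_lepm_embed lmg_lmh.
exists (unembed_poly f g); rewrite ?g_eq //.
rewrite -(lepm_embed f_inj) -lm_embed_poly ?g_eq //.
by apply: restricted_basis_neq0; rewrite g_eq.
Qed.

Lemma reduced_groebner_restriction :
  is_reduced_groebner_basis (induced_order f le) J (fun h => G (embed_poly f h)).
Proof.
case: G_red => _ G_monic G_reduced.
split; [split | |].
- exact: restricted_basis_finite.
- by move=> h Gh; rewrite J_embed (G_in_I Gh).1 restricted_basis_neq0.
- exact: restricted_basis_lm_dvd.
- move=> h Gh; rewrite -(mcoeff_embed_polyE f_inj) -lm_embed_poly //.
    exact: G_monic.
  exact: restricted_basis_neq0.
- move=> h h' Gh Gh' neq_hh' a ah.
  have neq : embed_poly f h <> embed_poly f h' by move/(embed_poly_inj f_inj).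
  have := G_reduced _ _ Gh Gh' neq _ (etrans (embed_poly_msupp f_inj _ _) ah).
  by rewrite lm_embed_poly ?lepm_embed ?(restricted_basis_neq0 Gh').
Qed.

End ReducedGroebnerRestriction.

Section ToricIdeal.
Variables (K : fieldType) (N m : nat) (v : 'I_m -> 'X_{1..N}).

Lemma toric_idealB (p q : {mpoly K[m]}) :
  toric_ideal v p -> toric_ideal v q -> toric_ideal v (p - q).
Proof. by rewrite /toric_ideal => /eqP vp /eqP vq; rewrite comp_mpolyB vp vq subrr. Qed.

Lemma toric_ideal_zero_outside (P : pred 'I_m) (Q : pred 'I_N) :
    (forall j, P j = supported_in Q (v j)) ->
  forall p : {mpoly K[m]}, toric_ideal v p -> toric_ideal v (zero_outside P p).
Proof.
rewrite /toric_ideal => P_Q p /eqP vp; apply/eqP.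
transitivity (zero_outside Q (p \mPo [tuple ('X_[v j] : {mpoly K[N]}) | j < m])).
  rewrite /zero_outside !comp_mpolyA; congr (_ \mPo _); apply: eq_from_tnth => j.
  rewrite !tnth_mktuple -/(zero_outside Q _) zero_outsideX -P_Q.
  by case: (P j); rewrite ?comp_mpoly0 // comp_mpolyXU -tnth_nth tnth_mktuple.
by rewrite vp /zero_outside comp_mpoly0.
Qed.

End ToricIdeal.

Section Polarization.
Variables (n : nat) (k : 'I_n -> nat).
Hypothesis k_pos : forall i, (0 < k i)%N.

Definition first_col : pred 'I_#|var_alpha k| :=
  fun t => val (tagged (enum_val t)) == 0%N.

Definition first_var (i : 'I_n) : var_alpha k :=
  @Tagged _ i (fun i => 'I_(k i)) (Ordinal (k_pos i)).

Definition first_var_rank (i : 'I_n) : 'I_#|var_alpha k| := enum_rank (first_var i).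

Lemma first_var_rank_inj : injective first_var_rank.
Proof. by move=> i j /enum_rank_inj /(congr1 tag). Qed.

Lemma iota_alpha_inj : injective (iota_alpha k).
Proof.
move=> u u' eq_uu'; apply/mnmP => i.
by have := congr1 (fun w : mon_alpha k => w (first_var i)) eq_uu'; rewrite !ffunE.
Qed.

Lemma mon_alpha_mnm_iota u : mon_alpha_mnm (iota_alpha k u) = embed_mnm first_var_rank u.
Proof.
apply/mnmP => j; have [t ->] : {t | j = enum_rank t}.
  by exists (enum_val j); rewrite enum_valK.
rewrite mnmE ffunE enum_rankK; case: t => i x /=; case: eqP => [x0|x_neq0].
  have -> : x = Ordinal (k_pos i) by apply: val_inj.
  by rewrite -[enum_rank _]/(first_var_rank i) (embed_mnmE first_var_rank_inj).
rewrite embed_mnmE_notin //; apply/negP => /codomP[i' /enum_rank_inj eq_t].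
by apply: x_neq0; move: eq_t => /(congr1 (fun t : var_alpha k => val (tagged t))).
Qed.

Lemma supported_first_col_iota u :
  supported_in first_col (mon_alpha_mnm (iota_alpha k u)).
Proof.
apply/forallP => t; apply/implyP; rewrite mnmE ffunE.
by case: ifP => [t0 _ | _]; [exact: t0 | rewrite eqxx].
Qed.

Lemma supported_first_colP w :
  supported_in first_col (mon_alpha_mnm w) -> w = iota_alpha k (pi_alpha w).
Proof.
move/forallP => w_first; apply/ffunP => -[i x]; rewrite ffunE /=.
have w0 (y : 'I_(k i)) : val y != 0%N -> w (@Tagged _ i (fun i => 'I_(k i)) y) = 0%N.
  move=> y0; have := w_first (enum_rank (@Tagged _ i (fun i => 'I_(k i)) y)).
  by rewrite mnmE /first_col enum_rankK (negbTE y0) implybF negbK => /eqP.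
case: eqP => [x0|/eqP/w0//]; rewrite mnmE (bigD1 x) //= big1 ?addn0 // => y neq_yx.
by apply: w0; apply: contra neq_yx => /eqP y0; apply/eqP/val_inj; rewrite /= y0 x0.
Qed.

End Polarization.

Section PolarizationToricIdeal.
Variables (K : fieldType) (n : nat) (k : 'I_n -> nat) (m : nat) (A : 'I_m -> 'X_{1..n}).
Variables (M : nat) (e : 'I_M -> mon_alpha k) (f : 'I_m -> 'I_M).
Hypothesis k_pos : forall i, (0 < k i)%N.
Hypothesis e_inj : injective e.
Hypothesis e_enum : forall w : mon_alpha k,
  (exists j, e j = w) <-> (exists i, pi_alpha w = A i).
Hypothesis hf : forall i, e (f i) = iota_alpha k (A i).

Lemma toric_ideal_embed (h : {mpoly K[m]}) :
  toric_ideal A h = toric_ideal (fun j => mon_alpha_mnm (e j)) (embed_poly f h).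
Proof.
rewrite /toric_ideal -(embed_poly_eq0 (@first_var_rank_inj _ _ k_pos)).
rewrite /embed_poly !comp_mpolyA.
apply: (congr1 (fun lq => h \mPo lq == 0)); apply: eq_from_tnth => i.
rewrite !tnth_mktuple comp_mpolyXU -tnth_nth tnth_mktuple hf.
rewrite (@mon_alpha_mnm_iota _ _ k_pos).
by rewrite -/(embed_poly (first_var_rank k_pos) _) embed_polyX.
Qed.

Lemma codom_first_col j :
  (j \in codom f) = supported_in (@first_col _ k) (mon_alpha_mnm (e j)).
Proof.
apply/idP/idP => [/codomP[i ->]|/supported_first_colP e_iota].
  by rewrite hf supported_first_col_iota.
have [i pi_ej] : exists i, pi_alpha (e j) = A i by apply/e_enum; exists j.
by apply/codomP; exists i; apply: e_inj; rewrite hf -pi_ej -e_iota.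
Qed.

End PolarizationToricIdeal.

Theorem proposition2p9 (K : fieldType) (n : nat) (k : 'I_n -> nat)
  (k_pos : forall i, (0 < k i)%N)
  (m : nat) (A : 'I_m -> 'X_{1..n})
  (A_min : forall i j : 'I_m, i != j -> ~~ (A i <= A j)%MM)
  (A_hom : homogeneous_toric_algebra K A)
  (M : nat) (e : 'I_M -> mon_alpha k) (e_inj : injective e)
  (e_enum : forall w : mon_alpha k,
      (exists j, e j = w) <-> (exists i, pi_alpha w = A i))
  (f : 'I_m -> 'I_M) (hf : forall i, e (f i) = iota_alpha k (A i))
  (le : rel 'X_{1..M}) (hle : term_order le)
  (G : {mpoly K[M]} -> Prop)
  (hG : is_reduced_groebner_basis le
          (@toric_ideal K _ M (fun j => mon_alpha_mnm (e j))) G) :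
  is_reduced_groebner_basis (induced_order f le) (@toric_ideal K n m A)
    (fun h => G (embed_poly f h)).
Proof.
have f_inj : injective f.
  move=> i j /(congr1 e); rewrite !hf => /(iota_alpha_inj k_pos) eq_Aij.
  by apply/eqP/negPn/negP => /A_min; rewrite eq_Aij lepm_refl.
apply: (reduced_groebner_restriction f_inj hle hG).
- exact: toric_ideal_embed.
- exact: toric_idealB.
- exact/toric_ideal_zero_outside/codom_first_col.
Qed.
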